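(* In an execution of Algorithm A2 (described in the context) with $n>3t$ and a strong $(t+1)$ common coin, suppose some non-faulty process decides $v\in\{0,1\}$ in round $r$. Then at every non-faulty process: (i) in every round $\rho\ge r$, the flag $\mathit{ptr}[v]$ (eventually) equals $\mathit{true}$, and no non-faulty process decides $\neg v$; (ii) in every round $\rho>r$, the flag $\mathit{ptr}[\neg v]$ is $\mathit{false}$ (never becomes true).
   Context: System model: $n$ asynchronous sequential processes $p_1,\dots,p_n$, of which at most $t$ are Byzantine (behave arbitrarily, may collude); the others are non-faulty. Processes communicate over reliable asynchronous point-to-point channels between every pair: messages between non-faulty processes are eventually delivered, unaltered, not duplicated, and the receiver knows the identity of the sender; there is no bound on delays and the adversary controls delivery order. ''Broadcast $m$'' means sending $m$ to every process (including oneself). When counting messages ''received from $k$ distinct processes'', at most one message per sender is counted. S-Broadcast with tag $T$, value $v$ and Boolean $\mathit{sb}_i$ at process $p_i$: set the Boolean flag $\mathit{sval}_i\leftarrow\mathit{false}$; if $\mathit{sb}_i=\mathit{true}$, broadcast $\mathrm{SVAL}(T,v)$; return a reference to $\mathit{sval}_i$ (which may later become true). In the background (only for messages carrying this same value $v$): when $\mathrm{SVAL}(T,v)$ has been received from $t+1$ distinct processes and $p_i$ has not yet broadcast $\mathrm{SVAL}(T,v)$, $p_i$ broadcasts $\mathrm{SVAL}(T,v)$; when $\mathrm{SVAL}(T,v)$ has been received from $2t+1$ distinct processes, $p_i$ sets $\mathit{sval}_i\leftarrow\mathit{true}$. Instances with different (tag, value) pairs are independent. Strong $(t+1)$ common coin: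 for each round $r$, a call $\mathsf{random}()$ in round $r$ returns the same uniformly random bit to every non-faulty caller; this bit is unpredictable and is not revealed to anyone before at least $t+1$ non-faulty processes have called $\mathsf{random}()$ in round $r$. Algorithm A2 (binary consensus), at non-faulty $p_i$ proposing $v_i\in\{0,1\}$, with a two-entry array $\mathit{ptr}[0],\mathit{ptr}[1]$ of references to Boolean flags: set $s\leftarrow\neg v_i$, $r\leftarrow0$, $\mathit{support}\leftarrow\mathit{false}$; $\mathit{ptr}[s]\leftarrow$ S-Broadcast with tag $\mathrm{EST}[1]$, value $s$, Boolean $\mathit{false}$. Repeat forever: (1) $r\leftarrow r+1$. (2) $\mathit{ptr}[\neg s]\leftarrow$ S-Broadcast with tag $\mathrm{EST}[r]$, value $\neg s$, Boolean $\neg\mathit{support}$ (the entry $\mathit{ptr}[s]$ is left unchanged, still referring to an earlier instance). (3) Wait until $\mathit{ptr}[0]=\mathit{true}$ or $\mathit{ptr}[1]=\mathit{true}$. (4) If $\mathit{support}=\mathit{true}$ then $w\leftarrow s$; else if $\mathit{ptr}[0]=\mathit{true}$ then $w\leftarrow0$; else ($\mathit{ptr}[1]=\mathit{true}$) $w\leftarrow1$. (5) Broadcast $\mathrm{AUX}(r,w)$. (6) Wait until there are $n-t$ distinct processes $p_j$ from which a message $\mathrm{AUX}(r,w_j)$ has been received with $\mathit{ptr}[w_j]=\mathit{true}$; let $\mathit{view}$ be the set of these values $w_j$. (7) $s\leftarrow\mathsf{random}()$. (8) If $\mathit{view}=\{s\}$: $\mathit{support}\leftarrow\mathit{true}$ and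 decide $s$ if not yet decided; else if $\mathit{view}=\{0,1\}$: $\mathit{support}\leftarrow\mathit{true}$; else $\mathit{support}\leftarrow\mathit{false}$. ($\neg$ denotes bit negation.) *)

From HB Require Import structures.
From mathcomp Require Import all_boot.
Set Implicit Arguments. Unset Strict Implicit. Unset Printing Implicit Defensive.

(* PInit    : before the initialisation part of A2.
   PStart   : about to execute steps (1)-(2) of the next round
              (rnd = last completed round).
   PWaitEst : steps (3)-(5) of round rnd (after step (2)).
   PWaitAux : steps (6)-(8) of round rnd. *)
Inductive PC := PInit | PStart | PWaitEst | PWaitAux.

(* Messages: SVAL(EST[k], x) and AUX(k, w). *)
Inductive Msg := SVAL of nat & bool | AUX of nat & bool.

(* An S-Broadcast instance is identified by its tag
   EST[k] (the number k) and its value x.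
   ptr x      : Some k iff ptr[x] refers to the flag sval of instance (EST[k], x)
   invoked k x: instance (EST[k], x) has been invoked
   sflag k x  : the Boolean flag sval of instance (EST[k], x)
   sv_sent k x: the process has broadcast SVAL(EST[k], x)
   aux_sent k w: the process has broadcast AUX(k, w)
   rcv_sval k x / rcv_aux k w : set of senders from which SVAL(EST[k],x) /
                                AUX(k,w) has been received
   dec        : Some (v, r) iff the process decided v in round r *)
Record lstate (n : nat) := LState {
  pc : PC; rnd : nat; est : bool; sup : bool;
  ptr : bool -> option nat;
  invoked : nat -> bool -> bool;
  sflag : nat -> bool -> bool;
  sv_sent : nat -> bool -> bool;
  aux_sent : nat -> bool -> bool;
  rcv_sval : nat -> bool -> {set 'I_n};
  rcv_aux : nat -> bool -> {set 'I_n};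
  dec : option (bool * nat) }.

Definition upd1 {A : Type} (f : bool -> A) (x : bool) (a : A) : bool -> A :=
  fun x' => if x' == x then a else f x'.
Definition upd2 {A : Type} (f : nat -> bool -> A) (k : nat) (x : bool) (a : A)
  : nat -> bool -> A :=
  fun k' x' => if (k' == k) && (x' == x) then a else f k' x'.

Section Model.
Variables (n t : nat).
Implicit Types (ls : lstate n).

(* Background part of all invoked S-Broadcast instances: echo on t+1
   receptions, set the flag on 2t+1 receptions (messages received before the
   invocation are taken into account). *)
Definition close ls : lstate n :=
  LState (pc ls) (rnd ls) (est ls) (sup ls) (ptr ls) (invoked ls)
    (fun k x => sflag ls k x || invoked ls k x && (2 * t + 1 <= #|rcv_sval ls k x|))
    (fun k x => sv_sent ls k x || invoked ls k x && (t + 1 <= #|rcv_sval ls k x|))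
    (aux_sent ls) (rcv_sval ls) (rcv_aux ls) (dec ls).

(* S-Broadcast with tag EST[k], value x, Boolean b. *)
Definition invoke ls (k : nat) (x b : bool) : lstate n :=
  close (LState (pc ls) (rnd ls) (est ls) (sup ls) (ptr ls)
    (upd2 (invoked ls) k x true)
    (upd2 (sflag ls) k x false)
    (upd2 (sv_sent ls) k x (sv_sent ls k x || b))
    (aux_sent ls) (rcv_sval ls) (rcv_aux ls) (dec ls)).

Definition receive ls (j : 'I_n) (m : Msg) : lstate n :=
  close (match m with
  | SVAL k x => LState (pc ls) (rnd ls) (est ls) (sup ls) (ptr ls) (invoked ls)
      (sflag ls) (sv_sent ls) (aux_sent ls)
      (upd2 (rcv_sval ls) k x (j |: rcv_sval ls k x)) (rcv_aux ls) (dec ls)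
  | AUX k w => LState (pc ls) (rnd ls) (est ls) (sup ls) (ptr ls) (invoked ls)
      (sflag ls) (sv_sent ls) (aux_sent ls)
      (rcv_sval ls) (upd2 (rcv_aux ls) k w (j |: rcv_aux ls k w)) (dec ls)
  end).

Definition ptrflag ls (x : bool) : bool :=
  if ptr ls x is Some k then sflag ls k x else false.

(* One atomic local step of the algorithm text at a non-faulty process with
   proposal vi; coin r is the bit returned by random() in round r. *)
Definition lstep (coin : nat -> bool) (vi : bool) ls (ls' : lstate n) : Prop :=
  match pc ls with
  | PInit =>
      let s := ~~ vi in
      ls' = invoke (LState PStart 0 s false (upd1 (ptr ls) s (Some 1))
                     (invoked ls) (sflag ls) (sv_sent ls) (aux_sent ls)
                     (rcv_sval ls) (rcv_aux ls) (dec ls)) 1 s false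
  | PStart =>
      let r := (rnd ls).+1 in
      let s := est ls in
      ls' = invoke (LState PWaitEst r s (sup ls) (upd1 (ptr ls) (~~ s) (Some r))
                     (invoked ls) (sflag ls) (sv_sent ls) (aux_sent ls)
                     (rcv_sval ls) (rcv_aux ls) (dec ls)) r (~~ s) (~~ sup ls)
  | PWaitEst =>
      (ptrflag ls false || ptrflag ls true) /\
      let w := if sup ls then est ls
               else if ptrflag ls false then false else true in
      ls' = close (LState PWaitAux (rnd ls) (est ls) (sup ls) (ptr ls)
                     (invoked ls) (sflag ls) (sv_sent ls)
                     (upd2 (aux_sent ls) (rnd ls) w true)
                     (rcv_sval ls) (rcv_aux ls) (dec ls))
  | PWaitAux =>
      exists (S : {set 'I_n}) (wj : 'I_n -> bool),
        #|S| = n - t /\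
        (forall j, j \in S -> j \in rcv_aux ls (rnd ls) (wj j) /\ ptrflag ls (wj j)) /\
        let inview b := [exists j in S, wj j == b] in
        let s := coin (rnd ls) in
        let '(sup', dec') :=
          if inview s && ~~ inview (~~ s) then
            (true, if dec ls is None then Some (s, rnd ls) else dec ls)
          else if inview false && inview true then (true, dec ls)
          else (false, dec ls) in
        ls' = LState PStart (rnd ls) s sup' (ptr ls) (invoked ls) (sflag ls)
                (sv_sent ls) (aux_sent ls) (rcv_sval ls) (rcv_aux ls) dec'
  end.

Definition sent ls (m : Msg) : bool :=
  match m with SVAL k x => sv_sent ls k x | AUX k w => aux_sent ls k w end.
Definition rcvd ls (j : 'I_n) (m : Msg) : bool :=
  match m with SVAL k x => j \in rcv_sval ls k x | AUX k w => j \in rcv_aux ls k w end.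

Definition gstate := 'I_n -> lstate n.

Inductive label := Local of 'I_n | Deliver of 'I_n & 'I_n & Msg
                 | Byz of 'I_n & 'I_n & Msg | Idle.

Definition gupd (g : gstate) (i : 'I_n) (ls : lstate n) : gstate :=
  fun j => if j == i then ls else g j.

(* F is the set of Byzantine processes: they can send any
   message to anybody at any time (Byz); messages broadcast by non-faulty
   processes are delivered (Deliver) in any order. *)
Definition gstep (F : {set 'I_n}) (prop : 'I_n -> bool) (coin : nat -> bool)
  (g : gstate) (l : label) (g' : gstate) : Prop :=
  match l with
  | Local i => i \notin F /\ lstep coin (prop i) (g i) (g' i) /\
               (forall j, j != i -> g' j = g j)
  | Deliver j i m => j \notin F /\ i \notin F /\ sent (g j) m /\
               g' = gupd g i (receive (g i) j m)
  | Byz j i m => j \in F /\ i \notin F /\ g' = gupd g i (receive (g i) j m)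
  | Idle => g' = g
  end.

Definition init_ls : lstate n :=
  LState PInit 0 false false (fun _ => None) (fun _ _ => false) (fun _ _ => false)
    (fun _ _ => false) (fun _ _ => false) (fun _ _ => set0) (fun _ _ => set0) None.

Definition execution (F : {set 'I_n}) (prop : 'I_n -> bool) (coin : nat -> bool) (sigma : nat -> gstate) (lab : nat -> label) : Prop :=
  (forall i, sigma 0 i = init_ls) /\
  (forall k, gstep F prop coin (sigma k) (lab k) (sigma k.+1)).

(* Fairness: reliable channels between non-faulty processes, and every
   non-faulty process that is continuously enabled eventually takes a step. *)
Definition fair (F : {set 'I_n}) (prop : 'I_n -> bool) (coin : nat -> bool) (sigma : nat -> gstate) (lab : nat -> label) : Prop :=
  (forall k (j i : 'I_n) m, j \notin F -> i \notin F -> sent (sigma k j) m ->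
     exists k', rcvd (sigma k' i) j m) /\
  (forall (i : 'I_n) k, i \notin F ->
     (forall k', k <= k' -> exists g', gstep F prop coin (sigma k') (Local i) g') ->
     exists k', k <= k' /\ lab k' = Local i).

(* Process is in round rho (after step (2) of round rho and before step (1)
   of round rho+1). *)
Definition in_round ls (rho : nat) : Prop := pc ls <> PInit /\ rnd ls = rho.

End Model.

(* Every non-faulty process satisfies a local invariant (a record of facts
   relating its S-Broadcast flags, the messages it sent and its decision), and
   every message it received from a non-faulty sender was really sent.

   If p decides v in round r, then p received AUX(r, v) from n - t
   processes and v = coin r.  In every round rho > r, ptr[~~ v] refers to an
   instance EST[k] with r < k and coin (k - 1) = v.  By strong induction on k,
   no non-faulty process ever broadcasts SVAL(EST[k], ~~ v): an echo needs t + 1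
   senders, hence an earlier non-faulty one; a broadcast at step (2) of round k
   needs the view {~~ v} in round k - 1; for k - 1 = r its quorum would contain
   a non-faulty process that also sent AUX(r, v) to p, and for k - 1 > r it
   needs the flag of a smaller such instance.  So these flags stay false; as
   a decision on ~~ v in a round rho > r needs a non-faulty AUX(rho, ~~ v),
   hence such a flag, nobody decides ~~ v.

   By fairness and the intersection of quorums, every non-faulty
   process goes through every round.  In each round rho >= r the instance that
   ptr[v] refers to is S-broadcast by more than t non-faulty processes (in
   round r by the AUX(r, v) senders, later by all processes at step (2) when
   coin (rho - 1) = ~~ v), so the amplification of S-Broadcast sets its flag
   at every non-faulty process. *)

From HB Require Import structures.
From mathcomp Require Import all_boot zify.
From Stdlib Require Import Classical.
Set Implicit Arguments. Unset Strict Implicit. Unset Printing Implicit Defensive.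

Lemma negb_or_eq (x y : bool) : x = ~~ y \/ x = y.
Proof. by case: x; case: y; auto. Qed.

Lemma upd2_eq (A : Type) (f : nat -> bool -> A) k x a : upd2 f k x a k x = a.
Proof. by rewrite /upd2 !eqxx. Qed.

Lemma upd2_true (f : nat -> bool -> bool) k0 x0 k x : f k x -> upd2 f k0 x0 true k x.
Proof. by rewrite /upd2; case: ifP. Qed.

Lemma upd2_orb (f : nat -> bool -> bool) k0 x0 b k x : f k x -> upd2 f k0 x0 (f k0 x0 || b) k x.
Proof. by rewrite /upd2; case: ifP => [/andP[/eqP-> /eqP->] ->|]. Qed.

Lemma upd2_orbP (f : nat -> bool -> bool) k0 x0 b k x :
  upd2 f k0 x0 (f k0 x0 || b) k x -> f k x \/ [/\ k = k0, x = x0 & b].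
Proof.
rewrite /upd2; case: ifP => [/andP[/eqP-> /eqP->] /orP[] | _]; by [left | right].
Qed.

Lemma upd2_subset (n : nat) (f : nat -> bool -> {set 'I_n}) k0 x0 j k x :
  f k x \subset upd2 f k0 x0 (j |: f k0 x0) k x.
Proof. by rewrite /upd2; case: ifP => [/andP[/eqP-> /eqP->]|_]; [apply: subsetUr|]. Qed.

Lemma upd2_sflagE (sf inv c : nat -> bool -> bool) k0 x0 :
  (forall k x, sf k x = inv k x && c k x) ->
  forall k x, upd2 sf k0 x0 false k x || upd2 inv k0 x0 true k x && c k x =
              upd2 inv k0 x0 true k x && c k x.
Proof. by move=> H k x; rewrite /upd2; case: ifP => //= _; rewrite H; case: (_ && _). Qed.

Lemma upd2_sflag_mono (sf inv c : nat -> bool -> bool) k0 x0 k x :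
  (forall k x, sf k x = inv k x && c k x) -> sf k x ->
  upd2 sf k0 x0 false k x || upd2 inv k0 x0 true k x && c k x.
Proof. by move=> H; rewrite upd2_sflagE // H => /andP[/(upd2_true k0 x0) -> ->]. Qed.

Section LocalInvariant.
Variables (n t : nat) (coin : nat -> bool).
Implicit Types (ls : lstate n) (vi : bool).

(* In round [rho > 0], [ptr[x]] refers to the instance [EST[est_tag rho x]]:
   both entries start at [EST[1]], and step (2) of round [rho > 1] re-points
   [ptr[~~ s]] to [EST[rho]], where [s = coin (rho - 1)]. *)
Fixpoint est_tag (rho : nat) (x : bool) : nat :=
  match rho with
  | 0 => 1
  | rho'.+1 => if (0 < rho') && (x == ~~ coin rho') then rho else est_tag rho' x
  end.

Lemma est_tagS rho x :
  est_tag rho.+1 x = if (0 < rho) && (x == ~~ coin rho) then rho.+1 else est_tag rho x.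
Proof. by []. Qed.

Lemma est_tag1 x : est_tag 1 x = 1.
Proof. by []. Qed.

Lemma est_tag_succ rho s : (0 < rho -> s = coin rho) ->
  est_tag rho.+1 (~~ s) = rho.+1 /\ est_tag rho.+1 s = est_tag rho s.
Proof.
case: (posnP rho) => [-> //| rho_gt0 /(_ isT) ->].
by rewrite !est_tagS rho_gt0 eqxx; case: (coin rho).
Qed.

Lemma est_tag_le rho x : 0 < rho -> est_tag rho x <= rho.
Proof.
elim: rho => [//|rho IH] _; rewrite est_tagS.
case: ifP => // _; case: (posnP rho) => [-> // | /IH le_rho].
exact: leq_trans le_rho (leqnSn rho).
Qed.

Arguments est_tag : simpl never.

(* Position in the program text; it increases by one at every local step, so
   progress of a process is progress of a natural number. *)
Definition stage ls : nat :=
  match pc ls with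
  | PInit => 0
  | PStart => 3 * rnd ls + 1
  | PWaitEst => 3 * rnd ls - 1
  | PWaitAux => 3 * rnd ls
  end.

Definition in_view (S : {set 'I_n}) (w : 'I_n -> bool) (b : bool) : bool :=
  [exists j in S, w j == b].

Definition unanimous_view (S : {set 'I_n}) (w : 'I_n -> bool) (s : bool) : bool :=
  in_view S w s && ~~ in_view S w (~~ s).

Definition view_supports (S : {set 'I_n}) (w : 'I_n -> bool) (s : bool) : bool :=
  unanimous_view S w s || in_view S w false && in_view S w true.

Definition end_round ls (S : {set 'I_n}) (w : 'I_n -> bool) : lstate n :=
  let s := coin (rnd ls) in
  LState PStart (rnd ls) s (view_supports S w s) (ptr ls) (invoked ls) (sflag ls)
    (sv_sent ls) (aux_sent ls) (rcv_sval ls) (rcv_aux ls)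
    (if unanimous_view S w s && (dec ls == None) then Some (s, rnd ls) else dec ls).

Definition valid_view ls (S : {set 'I_n}) (w : 'I_n -> bool) : Prop :=
  #|S| = n - t /\
  forall j, j \in S -> j \in rcv_aux ls (rnd ls) (w j) /\ ptrflag ls (w j).

Lemma lstep_PWaitAuxP vi ls ls' : pc ls = PWaitAux ->
  lstep t coin vi ls ls' <-> exists S w, valid_view ls S w /\ ls' = end_round ls S w.
Proof.
rewrite /lstep /valid_view /end_round /view_supports /unanimous_view /in_view => ->.
split.
- case=> S [w [HS [Hw E]]]; exists S, w; split=> //; move: E.
  case: ifP => _; last by case: ifP => _ /= ->.
  by case: (dec ls) => [d|] /= ->.
- case=> S [w [[HS Hw] ->]]; exists S, w; do 2!split=> //.
  by case: ifP => _ /=; [case: (dec ls) | case: ifP].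
Qed.

Arguments lstep_PWaitAuxP {vi ls ls'}.

Record local_inv vi ls : Prop := {
  ptr_tag : pc ls <> PInit -> 0 < rnd ls -> forall x, ptr ls x = Some (est_tag (rnd ls) x);
  rnd_gt0 : pc ls = PWaitEst \/ pc ls = PWaitAux -> 0 < rnd ls;
  est_coin : pc ls = PStart -> 0 < rnd ls -> est ls = coin (rnd ls);
  sflagE : forall k x, sflag ls k x = invoked ls k x && (2 * t + 1 <= #|rcv_sval ls k x|);
  echo_sent : forall k x, invoked ls k x -> t + 1 <= #|rcv_sval ls k x| -> sv_sent ls k x;
  invoked_tag : forall rho x, 0 < rho -> 3 * rho - 1 <= stage ls ->
    invoked ls (est_tag rho x) x;
  round0_state : pc ls = PStart -> rnd ls = 0 ->
    [/\ invoked ls 1 (est ls), ptr ls (est ls) = Some 1, est ls = ~~ vi & sup ls = false];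
  aux_sent_flag : forall rho w, aux_sent ls rho w ->
    [/\ 0 < rho, 3 * rho <= stage ls & sflag ls (est_tag rho w) w];
  aux_sent_uniq : forall rho, ~~ (aux_sent ls rho false && aux_sent ls rho true);
  sup_flag : sup ls ->
    [/\ pc ls <> PInit, 0 < rnd ls & sflag ls (est_tag (rnd ls) (est ls)) (est ls)];
  (* the third branch of step (8): the view is [{~~ s}] *)
  unsup_quorum : pc ls = PStart -> 0 < rnd ls -> sup ls = false ->
    (exists S : {set 'I_n}, #|S| = n - t /\ S \subset rcv_aux ls (rnd ls) (~~ coin (rnd ls)))
    /\ sflag ls (est_tag (rnd ls) (~~ coin (rnd ls))) (~~ coin (rnd ls));
  dec_quorum : forall x rho, dec ls = Some (x, rho) ->
    [/\ x = coin rho, 0 < rho & exists S : {set 'I_n}, #|S| = n - t /\ S \subset rcv_aux ls rho x];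
  (* after step (2) of round [rho + 1], [s = coin rho] was either supported, or
     [~~ s] was S-broadcast with Boolean [true] *)
  est_sent_or_flag : forall rho, 0 < rho -> 3 * rho + 2 <= stage ls ->
    sv_sent ls rho.+1 (~~ coin rho) || sflag ls (est_tag rho (coin rho)) (coin rho);
  proposal_sent : 2 <= stage ls -> sv_sent ls 1 vi;
  aux_sent_round : forall rho, 0 < rho -> 3 * rho <= stage ls ->
    aux_sent ls rho false || aux_sent ls rho true }.

Lemma local_inv_init vi : local_inv vi (init_ls n).
Proof. by constructor; rewrite /stage //=; [case | move=> *; lia..]. Qed.

Lemma local_inv_close vi ls (rs ra : nat -> bool -> {set 'I_n}) :
  local_inv vi ls ->
  (forall k x, rcv_sval ls k x \subset rs k x) -> (forall k x, rcv_aux ls k x \subset ra k x) ->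
  local_inv vi (close t (LState (pc ls) (rnd ls) (est ls) (sup ls) (ptr ls) (invoked ls)
    (sflag ls) (sv_sent ls) (aux_sent ls) rs ra (dec ls))).
Proof.
move=> HL Hs Ha.
have sf_or k x : sflag ls k x -> sflag ls k x || invoked ls k x && (2 * t + 1 <= #|rs k x|).
  by move=> ->.
have sub_quorum rho x : (exists S : {set 'I_n}, #|S| = n - t /\ S \subset rcv_aux ls rho x) ->
    exists S : {set 'I_n}, #|S| = n - t /\ S \subset ra rho x.
  by case=> S [HS HSa]; exists S; split=> //; apply: subset_trans HSa _.
constructor=> /=.
- exact: (ptr_tag HL).
- exact: (rnd_gt0 HL).
- exact: (est_coin HL).
- move=> k x; rewrite (sflagE HL); case: (invoked ls k x) => //=.
  by case: leqP => //= H; rewrite (leq_trans H (subset_leq_card (Hs k x))).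
- by move=> k x Hi Hc; rewrite Hi Hc orbT.
- exact: (invoked_tag HL).
- exact: (round0_state HL).
- by move=> rho w /(aux_sent_flag HL) [? ? /sf_or].
- exact: (aux_sent_uniq HL).
- by move=> /(sup_flag HL) [? ? /sf_or].
- by move=> H1 H2 H3; have [/sub_quorum ? /sf_or] := unsup_quorum HL H1 H2 H3.
- by move=> x rho /(dec_quorum HL) [? ? /sub_quorum].
- move=> rho H1 H2; case/orP: (est_sent_or_flag HL H1 H2) => [-> // | /sf_or ->].
  by rewrite orbT.
- by move=> /(proposal_sent HL) ->.
- exact: (aux_sent_round HL).
Qed.

Lemma local_inv_receive vi ls j m : local_inv vi ls -> local_inv vi (receive t ls j m).
Proof.
by move=> HL; case: m => k x; apply: local_inv_close => // k' x'; apply: upd2_subset.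
Qed.

Lemma local_inv_PInit vi ls ls' : local_inv vi ls -> pc ls = PInit ->
  lstep t coin vi ls ls' -> local_inv vi ls'.
Proof.
move=> HL Hpc; rewrite /lstep Hpc => ->.
have no_aux rho w : aux_sent ls rho w = false.
  by apply/negP => /(aux_sent_flag HL) [rho_gt0 +]; rewrite /stage Hpc; lia.
constructor; rewrite /stage //=.
- by case.
- exact: upd2_sflagE (sflagE HL).
- by move=> k x -> ->; rewrite orbT.
- by move=> rho x ? ?; exfalso; lia.
- by rewrite /upd1 !upd2_eq eqxx.
- by move=> rho w; rewrite no_aux.
- by move=> rho; rewrite !no_aux.
- exact: (dec_quorum HL).
- by move=> rho ? ?; exfalso; lia.
- by move=> rho ? ?; exfalso; lia.
Qed.

Lemma local_inv_PStart_est vi ls : local_inv vi ls -> pc ls = PStart ->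
  ptr ls (est ls) = Some (est_tag (rnd ls) (est ls)) /\
  invoked ls (est_tag (rnd ls) (est ls)) (est ls).
Proof.
move=> HL Hpc; case: (posnP (rnd ls)) => [r0 | r_gt0].
  by case: (round0_state HL Hpc r0) => ? ?; rewrite r0.
by rewrite (ptr_tag HL) ?Hpc // (invoked_tag HL) // /stage Hpc; lia.
Qed.

Lemma local_inv_PStart vi ls ls' : local_inv vi ls -> pc ls = PStart ->
  lstep t coin vi ls ls' -> local_inv vi ls'.
Proof.
move=> HL Hpc; rewrite /lstep Hpc => ->.
have sf_mono k0 x0 k x : sflag ls k x -> upd2 (sflag ls) k0 x0 false k x ||
    upd2 (invoked ls) k0 x0 true k x && (2 * t + 1 <= #|rcv_sval ls k x|).
  exact: upd2_sflag_mono (sflagE HL).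
have Hst : stage ls = 3 * rnd ls + 1 by rewrite /stage Hpc.
have [tag_new tag_keep] := est_tag_succ (est_coin HL Hpc).
have [ptr_est inv_est] := local_inv_PStart_est HL Hpc.
constructor; rewrite /stage //=.
- move=> _ _ x; rewrite /upd1; case: (negb_or_eq x (est ls)) => ->.
    by rewrite eqxx tag_new.
  have -> : (est ls == ~~ est ls) = false by case: (est ls).
  by rewrite tag_keep.
- exact: upd2_sflagE (sflagE HL).
- by move=> k x -> ->; rewrite orbT.
- move=> rho x rho_gt0 Hrho; case: (ltnP rho (rnd ls).+1) => [lt_rho | ge_rho].
    by apply: upd2_true; apply: (invoked_tag HL) => //; rewrite Hst; lia.
  have -> : rho = (rnd ls).+1 by lia.
  case: (negb_or_eq x (est ls)) => ->; first by rewrite tag_new upd2_eq.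
  by rewrite tag_keep; apply: upd2_true.
- move=> rho w /(aux_sent_flag HL) [rho_gt0 Hrho /sf_mono ->]; split=> //.
  by rewrite Hst in Hrho; lia.
- exact: (aux_sent_uniq HL).
- by move=> /(sup_flag HL) [_ r_gt0 /sf_mono]; rewrite tag_keep.
- exact: (dec_quorum HL).
- move=> rho rho_gt0 Hrho; case: (ltnP rho (rnd ls)) => [lt_rho | ge_rho].
    have Hrho' : 3 * rho + 2 <= stage ls by rewrite Hst; lia.
    case/orP: (est_sent_or_flag HL rho_gt0 Hrho') => [/upd2_orb -> // | /sf_mono ->].
    by rewrite orbT.
  have Er : rho = rnd ls by lia.
  have r_gt0 : 0 < rnd ls by rewrite -Er.
  rewrite Er -(est_coin HL Hpc r_gt0).
  case Hsup: (sup ls); first by case: (sup_flag HL Hsup) => _ _ /sf_mono ->; rewrite orbT.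
  by rewrite upd2_eq orbT.
- move=> _; case: (posnP (rnd ls)) => [r0 | r_gt0].
    by case: (round0_state HL Hpc r0) => _ _ -> ->; rewrite negbK r0 upd2_eq orbT.
  by rewrite upd2_orb // (proposal_sent HL) // Hst; lia.
- by move=> rho ? ?; apply: (aux_sent_round HL) => //; rewrite Hst; lia.
Qed.

Lemma local_inv_PWaitEst vi ls ls' : local_inv vi ls -> pc ls = PWaitEst ->
  lstep t coin vi ls ls' -> local_inv vi ls'.
Proof.
move=> HL Hpc; rewrite /lstep Hpc => -[Hflag ->].
have r_gt0 : 0 < rnd ls by apply: (rnd_gt0 HL); left.
have Hst : stage ls = 3 * rnd ls - 1 by rewrite /stage Hpc.
have Esf k x : sflag ls k x || invoked ls k x && (2 * t + 1 <= #|rcv_sval ls k x|) = sflag ls k x.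
  by rewrite (sflagE HL); case: (_ && _).
have Esv k x : sv_sent ls k x || invoked ls k x && (t + 1 <= #|rcv_sval ls k x|) = sv_sent ls k x.
  by case E: (_ && _); rewrite ?orbF //; case/andP: E => /(echo_sent HL) H /H ->.
have ptrflagE x : ptrflag ls x = sflag ls (est_tag (rnd ls) x) x.
  by rewrite /ptrflag (ptr_tag HL) ?Hpc.
set w := if sup ls then est ls else if ptrflag ls false then false else true.
have flag_w : sflag ls (est_tag (rnd ls) w) w.
  rewrite /w; case Hsup: (sup ls); first by case: (sup_flag HL Hsup).
  by rewrite -ptrflagE; case: ifP Hflag => //= _ ->.
have no_aux w' : aux_sent ls (rnd ls) w' = false.
  by apply/negP => /(aux_sent_flag HL) [_ +]; rewrite Hst; lia.
constructor; rewrite /stage //=.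
- by move=> _ _; apply: (ptr_tag HL); rewrite ?Hpc.
- by move=> k x; rewrite Esf (sflagE HL).
- by move=> k x Hi Hc; rewrite Esv (echo_sent HL).
- by move=> rho x ? ?; apply: (invoked_tag HL) => //; rewrite Hst; lia.
- move=> rho x; rewrite Esf /upd2; case: ifP => [/andP[/eqP-> /eqP->] _ // | _].
  case/(aux_sent_flag HL) => rho_gt0 Hrho ->; split=> //.
  by rewrite Hst in Hrho; lia.
- move=> rho; rewrite /upd2; case: (rho =P rnd ls) => [-> | _] /=.
    by rewrite !no_aux; case: (w).
  exact: (aux_sent_uniq HL).
- by rewrite Esf => /(sup_flag HL) [].
- exact: (dec_quorum HL).
- by move=> rho ? ?; rewrite Esv Esf (est_sent_or_flag HL) // Hst; lia.
- by move=> ?; rewrite Esv (proposal_sent HL) // Hst; lia.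
- move=> rho ? ?; rewrite /upd2; case: (rho =P rnd ls) => [-> | /eqP ?] /=.
    by case: (w); rewrite eqxx ?orbT.
  by apply: (aux_sent_round HL) => //; rewrite Hst; lia.
Qed.

Lemma view_supports_in_view S w s : view_supports S w s -> in_view S w s.
Proof. by case/orP => [/andP[] // | /andP[]]; case: s. Qed.

Lemma view_unsupported S w s : ~~ view_supports S w s -> {in S, forall j, w j = ~~ s}.
Proof.
move=> Hns; have Hs : ~~ in_view S w s.
  apply: contra Hns => Hs; rewrite /view_supports /unanimous_view Hs /=.
  by case: (boolP (in_view S w (~~ s))) => //; case: (s) Hs => -> ->.
move=> j Hj; have : w j != s.
  by apply: contra Hs => Hws; apply/existsP; exists j; rewrite Hj.
by case: (w j); case: (s).
Qed.

Lemma local_inv_PWaitAux vi ls ls' : t < n -> local_inv vi ls -> pc ls = PWaitAux ->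
  lstep t coin vi ls ls' -> local_inv vi ls'.
Proof.
move=> t_lt_n HL Hpc /(lstep_PWaitAuxP Hpc) [S [w [[HS Hw] ->]]].
have r_gt0 : 0 < rnd ls by apply: (rnd_gt0 HL); right.
have Hst : stage ls = 3 * rnd ls by rewrite /stage Hpc.
have ptrflagE x : ptrflag ls x = sflag ls (est_tag (rnd ls) x) x.
  by rewrite /ptrflag (ptr_tag HL) ?Hpc.
have view_flag j : j \in S -> sflag ls (est_tag (rnd ls) (w j)) (w j).
  by move=> /Hw []; rewrite ptrflagE.
have view_quorum x : {in S, forall j, w j = x} ->
    exists S' : {set 'I_n}, #|S'| = n - t /\ S' \subset rcv_aux ls (rnd ls) x.
  move=> Hx; exists S; split=> //; apply/subsetP => j Hj.
  by rewrite -(Hx j Hj); case: (Hw j Hj).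
rewrite /end_round; set s := coin (rnd ls).
constructor; rewrite /stage //=.
- by move=> _; apply: (ptr_tag HL); rewrite Hpc.
- exact: (sflagE HL).
- exact: (echo_sent HL).
- by move=> rho x ? ?; apply: (invoked_tag HL) => //; rewrite Hst; lia.
- by move=> _ r0; rewrite r0 in r_gt0.
- move=> rho x /(aux_sent_flag HL) [rho_gt0 Hrho ->]; split=> //.
  by rewrite Hst in Hrho; lia.
- exact: (aux_sent_uniq HL).
- by move=> /view_supports_in_view /existsP [j /andP[/view_flag + /eqP <-]].
- move=> _ _ /negbT /view_unsupported Hns; split; first exact: view_quorum.
  have : 0 < #|S| by rewrite HS; lia.
  by case/card_gt0P => j Hj; rewrite -(Hns j Hj); apply: view_flag.
- move=> x rho; case: ifP => [/andP[/andP[_ Hns] _] [<- <-] | _ /(dec_quorum HL) //].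
  split=> //; apply: view_quorum => j Hj; apply/eqP; apply: contraNT Hns => Hws.
  by apply/existsP; exists j; rewrite Hj /=; move: Hws; case: (w j); case: (s).
- by move=> rho ? ?; apply: (est_sent_or_flag HL) => //; rewrite Hst; lia.
- by move=> ?; apply: (proposal_sent HL); rewrite Hst; lia.
- by move=> rho ? ?; apply: (aux_sent_round HL) => //; rewrite Hst; lia.
Qed.

Lemma local_inv_lstep vi ls ls' : t < n ->
  local_inv vi ls -> lstep t coin vi ls ls' -> local_inv vi ls'.
Proof.
move=> t_lt_n HL; case Hpc: (pc ls).
- exact: local_inv_PInit.
- exact: local_inv_PStart.
- exact: local_inv_PWaitEst.
- exact: local_inv_PWaitAux t_lt_n HL Hpc.
Qed.

Lemma stage_lstep vi ls ls' : local_inv vi ls -> lstep t coin vi ls ls' ->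
  stage ls' = (stage ls).+1.
Proof.
move=> HL; case Hpc: (pc ls) => Hstep.
- by move: Hstep; rewrite /lstep Hpc => ->; rewrite /stage Hpc.
- by move: Hstep; rewrite /lstep Hpc => ->; rewrite /stage Hpc /=; lia.
- have := rnd_gt0 HL (or_introl Hpc).
  by move: Hstep; rewrite /lstep Hpc => -[_ ->]; rewrite /stage Hpc /=; lia.
- by move: Hstep => /(lstep_PWaitAuxP Hpc) [S [w [_ ->]]]; rewrite /stage Hpc addn1.
Qed.

Lemma lstep_rcv vi ls ls' : lstep t coin vi ls ls' ->
  rcv_sval ls' = rcv_sval ls /\ rcv_aux ls' = rcv_aux ls.
Proof.
case Hpc: (pc ls) => Hstep; last by move: Hstep => /(lstep_PWaitAuxP Hpc) [S [w [_ ->]]].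
- by move: Hstep; rewrite /lstep Hpc => ->.
- by move: Hstep; rewrite /lstep Hpc => ->.
- by move: Hstep; rewrite /lstep Hpc => -[_ ->].
Qed.

Lemma lstep_total_start vi ls : pc ls = PInit \/ pc ls = PStart ->
  exists ls', lstep t coin vi ls ls'.
Proof. by case=> Hpc; rewrite /lstep Hpc; eexists. Qed.

Lemma stage_start_round vi ls m : local_inv vi ls ->
  stage ls = 0 \/ stage ls = 3 * m + 1 -> pc ls = PInit \/ pc ls = PStart.
Proof.
move=> HL; rewrite /stage; case Hpc: (pc ls); auto.
- by move=> ?; exfalso; have := rnd_gt0 HL (or_introl Hpc); lia.
- by move=> ?; exfalso; have := rnd_gt0 HL (or_intror Hpc); lia.
Qed.

Lemma stage_PWaitEst vi ls m : local_inv vi ls -> stage ls = 3 * m + 2 ->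
  pc ls = PWaitEst /\ rnd ls = m.+1.
Proof.
move=> HL; rewrite /stage; case Hpc: (pc ls); try lia.
by have := rnd_gt0 HL (or_introl Hpc); split=> //; lia.
Qed.

Lemma stage_PWaitAux vi ls m : local_inv vi ls -> stage ls = 3 * m + 3 ->
  pc ls = PWaitAux /\ rnd ls = m.+1.
Proof. by move=> HL; rewrite /stage; case Hpc: (pc ls); split=> //; lia. Qed.

Record extends (a b : lstate n) : Prop := {
  rcv_sval_sub : forall k x, rcv_sval a k x \subset rcv_sval b k x;
  rcv_aux_sub : forall k x, rcv_aux a k x \subset rcv_aux b k x;
  invoked_mono : forall k x, invoked a k x -> invoked b k x;
  sv_sent_mono : forall k x, sv_sent a k x -> sv_sent b k x;
  aux_sent_mono : forall k x, aux_sent a k x -> aux_sent b k x;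
  stage_mono : stage a <= stage b }.

Lemma extends_refl a : extends a a.
Proof. by constructor. Qed.

Lemma extends_trans a b c : extends a b -> extends b c -> extends a c.
Proof.
move=> Hab Hbc; constructor=> [k x|k x|k x|k x|k x|].
- exact: subset_trans (rcv_sval_sub Hab k x) (rcv_sval_sub Hbc k x).
- exact: subset_trans (rcv_aux_sub Hab k x) (rcv_aux_sub Hbc k x).
- by move/(invoked_mono Hab)/(invoked_mono Hbc).
- by move/(sv_sent_mono Hab)/(sv_sent_mono Hbc).
- by move/(aux_sent_mono Hab)/(aux_sent_mono Hbc).
- exact: leq_trans (stage_mono Hab) (stage_mono Hbc).
Qed.

Lemma extends_receive ls j m : extends ls (receive t ls j m).
Proof.
by case: m => k x; constructor=> //= k' x'; rewrite ?upd2_subset // => ->.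
Qed.

Lemma extends_lstep vi ls ls' : local_inv vi ls -> lstep t coin vi ls ls' -> extends ls ls'.
Proof.
move=> HL Hstep; have [Es Ea] := lstep_rcv Hstep.
suff [Hi Hs Ha] : [/\ forall k x, invoked ls k x -> invoked ls' k x,
    forall k x, sv_sent ls k x -> sv_sent ls' k x &
    forall k x, aux_sent ls k x -> aux_sent ls' k x].
  by constructor; rewrite ?Es ?Ea ?(stage_lstep HL Hstep).
case Hpc: (pc ls) Hstep => Hstep.
- move: Hstep; rewrite /lstep Hpc => -> /=.
  by split=> // k x Hk; rewrite ?(upd2_true _ _ Hk) ?(upd2_orb _ _ _ Hk).
- move: Hstep; rewrite /lstep Hpc => -> /=.
  by split=> // k x Hk; rewrite ?(upd2_true _ _ Hk) ?(upd2_orb _ _ _ Hk).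
- move: Hstep; rewrite /lstep Hpc => -[_ ->] /=.
  by split=> // k x Hk; rewrite ?(upd2_true _ _ Hk) ?Hk.
- by move: Hstep => /(lstep_PWaitAuxP Hpc) [S [w [_ ->]]].
Qed.

Lemma sflag_extends vi vi' a b k x : local_inv vi a -> local_inv vi' b -> extends a b ->
  sflag a k x -> sflag b k x.
Proof.
move=> Ha Hb Hab; rewrite (sflagE Ha) (sflagE Hb) => /andP[/(invoked_mono Hab) -> c].
exact: leq_trans c (subset_leq_card (rcv_sval_sub Hab k x)).
Qed.

End LocalInvariant.

Arguments lstep_PWaitAuxP {n t coin vi ls ls'}.

Lemma eventually_all (T : finType) (Q : T -> nat -> Prop) (A : {pred T}) :
  (forall i k k', i \in A -> k <= k' -> Q i k -> Q i k') ->
  (forall i, i \in A -> exists k, Q i k) -> exists k, forall i, i \in A -> Q i k.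
Proof.
move=> Qmono HA.
suff [k Hk] : exists k, forall i, i \in enum A -> Q i k.
  by exists k => i Hi; apply: Hk; rewrite mem_enum.
have : {subset enum A <= A} by move=> i; rewrite mem_enum.
elim: (enum A) => [|a s IH] sA; first by exists 0.
have Aa := sA a (mem_head a s).
have sA' : {subset s <= A} by move=> i Hi; apply: sA; rewrite inE Hi orbT.
have [k1 H1] := HA a Aa.
have [k2 H2] := IH sA'.
exists (maxn k1 k2) => i; rewrite inE => /predU1P [-> | Hi].
- exact: Qmono Aa (leq_maxl _ _) H1.
- exact: Qmono (sA' i Hi) (leq_maxr _ _) (H2 i Hi).
Qed.

Lemma subset_of_card (T : finType) (A : {set T}) m : m <= #|A| ->
  exists2 B : {set T}, B \subset A & #|B| = m.
Proof.
elim: m => [|m IH] Hm; first by exists set0; rewrite ?sub0set ?cards0.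
have [B sBA cardB] := IH (ltnW Hm).
have : 0 < #|A :\: B| by rewrite cardsD (setIidPr sBA); lia.
case/card_gt0P => x; rewrite in_setD => /andP[xB xA].
by exists (x |: B); rewrite ?subUset ?sub1set ?xA // cardsU1 xB cardB.
Qed.

Section Execution.
Variables (n t : nat) (F : {set 'I_n}) (prop : 'I_n -> bool) (coin : nat -> bool).
Variables (sigma : nat -> gstate n) (lab : nat -> label n).
Hypothesis resilience : 3 * t < n.
Hypothesis few_faulty : #|F| <= t.
Hypothesis exec : execution t F prop coin sigma lab.
Hypothesis fairness : fair t F prop coin sigma lab.

Let t_lt_n : t < n. Proof. lia. Qed.

Lemma honest_card : n - t <= #|~: F|.
Proof. by have := cardsC F; rewrite card_ord; lia. Qed.

Lemma honest_card_gt : t < #|~: F|.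
Proof. have := honest_card; lia. Qed.

Lemma quorums_meet_honest (S1 S2 : {set 'I_n}) : #|S1| = n - t -> #|S2| = n - t ->
  exists j, [/\ j \in S1, j \in S2 & j \notin F].
Proof.
move=> H1 H2; have := max_card (S1 :|: S2); rewrite card_ord => HU.
have : 0 < #|(S1 :&: S2) :\: F|.
  rewrite cardsD; have := cardsUI S1 S2; have := subset_leq_card (subsetIr (S1 :&: S2) F).
  lia.
by case/card_gt0P => j; rewrite !inE => /and3P[? ? ?]; exists j.
Qed.

Lemma honest_step T i : i \notin F ->
  sigma T.+1 i = sigma T i \/
  lstep t coin (prop i) (sigma T i) (sigma T.+1 i) \/
  (exists j m, sigma T.+1 i = receive t (sigma T i) j m /\
               (j \in F \/ j \notin F /\ sent (sigma T j) m)).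
Proof.
move=> Hi; move: (exec.2 T); case: (lab T) => [j|j i' m|j i' m|] /=.
- case=> _ [Hs Ho]; case: (j =P i) => [<- | /eqP ne]; first by right; left.
  by left; apply: Ho; rewrite eq_sym.
- case=> Hj [_ [Hs ->]]; rewrite /gupd; case: eqP => [->|_]; last by left.
  by right; right; exists j, m; split=> //; right.
- case=> Hj [_ ->]; rewrite /gupd; case: eqP => [->|_]; last by left.
  by right; right; exists j, m; split=> //; left.
- by move=> ->; left.
Qed.

Lemma honest_local_inv T i : i \notin F -> local_inv t coin (prop i) (sigma T i).
Proof.
move=> Hi; elim: T => [|T IH]; first by rewrite exec.1; apply: local_inv_init.
case: (honest_step T Hi) => [-> // | [Hs | [j [m [-> _]]]]].
- exact: (local_inv_lstep t_lt_n IH Hs).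
- exact: local_inv_receive IH.
Qed.

Lemma honest_extends T T' i : i \notin F -> T <= T' -> extends (sigma T i) (sigma T' i).
Proof.
move=> Hi /subnK <-; elim: (T' - T) => [|d IH]; first exact: extends_refl.
apply: extends_trans IH _; rewrite addSn.
case: (honest_step (d + T) Hi) => [-> | [Hs | [j [m [-> _]]]]].
- exact: extends_refl.
- exact: (extends_lstep (honest_local_inv _ Hi) Hs).
- exact: extends_receive.
Qed.

Lemma sflag_mono T T' i k x : i \notin F -> T <= T' ->
  sflag (sigma T i) k x -> sflag (sigma T' i) k x.
Proof.
by move=> Hi HT; apply: sflag_extends (honest_extends Hi HT); apply: honest_local_inv.
Qed.

Lemma sent_mono T T' j m : j \notin F -> T <= T' -> sent (sigma T j) m -> sent (sigma T' j) m.
Proof.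
move=> Hj /(honest_extends Hj) Hext.
by case: m => k x; [apply: sv_sent_mono | apply: aux_sent_mono].
Qed.

Lemma rcvd_step T i j m : i \notin F -> rcvd (sigma T.+1 i) j m ->
  rcvd (sigma T i) j m \/ j \in F \/ j \notin F /\ sent (sigma T j) m.
Proof.
move=> Hi; case: (honest_step T Hi) => [-> | [Hs | [j' [m' [-> Hj']]]]]; first by left.
  by have [Es Ea] := lstep_rcv Hs; case: m => k x /=; rewrite ?Es ?Ea; left.
case: m' Hj' => k' x' Hj'; case: m => k x /=; try by left.
all: rewrite /upd2; case: ifP => [/andP[/eqP Ek /eqP Ex] | _]; try by left.
all: by rewrite Ek Ex in_setU1 => /orP[/eqP -> | ]; [right | left].
Qed.

Lemma rcvd_mono T T' i j m : i \notin F -> T <= T' -> rcvd (sigma T i) j m -> rcvd (sigma T' i) j m.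
Proof.
move=> Hi /(honest_extends Hi) Hext; case: m => k x /=; apply/subsetP;
  [exact: rcv_sval_sub | exact: rcv_aux_sub].
Qed.

Lemma rcvd_sender T i j m : i \notin F -> j \notin F ->
  rcvd (sigma T.+1 i) j m -> sent (sigma T j) m.
Proof.
move=> Hi Hj; elim: T => [|T IH] /(rcvd_step Hi) [Hr | [jF | [_ Hs]]] //;
  try by rewrite jF in Hj.
- by move: Hr; rewrite exec.1; case: m => k x; rewrite /= in_set0.
- exact: sent_mono Hj (leqnSn T) (IH Hr).
Qed.

Lemma rcvd_sent T i j m : i \notin F -> j \notin F -> rcvd (sigma T i) j m -> sent (sigma T j) m.
Proof. by move=> Hi Hj /(rcvd_mono Hi (leqnSn T)); apply: rcvd_sender. Qed.

Lemma sv_sent_close (ls : lstate n) k x : sv_sent (close t ls) k x ->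
  sv_sent ls k x \/ t.+1 <= #|rcv_sval ls k x|.
Proof. by case/orP=> [|/andP[_]]; [left | rewrite addn1; right]. Qed.

Lemma sv_sent_step T j k x : j \notin F -> sv_sent (sigma T.+1 j) k x ->
  sv_sent (sigma T j) k x \/ t.+1 <= #|rcv_sval (sigma T.+1 j) k x| \/
  [/\ pc (sigma T j) = PStart, k = (rnd (sigma T j)).+1, x = ~~ est (sigma T j)
    & sup (sigma T j) = false].
Proof.
move=> Hj; case: (honest_step T Hj) => [-> | [Hs | [j' [m [-> _]]]]]; first by left.
- have [Es _] := lstep_rcv Hs; rewrite Es.
  case Hpc: (pc (sigma T j)) Hs => Hs.
  + move: Hs; rewrite /lstep Hpc /invoke => -> /sv_sent_close /=.
    by case=> [/upd2_orbP [| [_ _ //]] |]; auto.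
  + move: Hs; rewrite /lstep Hpc /invoke => -> /sv_sent_close /=.
    case=> [/upd2_orbP [| [-> -> /negbTE sup_false]] |]; auto.
    by right; right.
  + by move: Hs; rewrite /lstep Hpc => -[_ ->] /sv_sent_close []; auto.
  + by move: Hs => /(lstep_PWaitAuxP Hpc) [S [w [_ ->]]]; left.
- by case: m => k' x' /sv_sent_close []; auto.
Qed.

Definition sent_by_many T k x : Prop :=
  exists2 A : {set 'I_n}, t < #|A| & {in A, forall j, j \notin F /\ sv_sent (sigma T j) k x}.

Lemma sflag_sent_by_many T i k x : i \notin F -> sflag (sigma T i) k x -> sent_by_many T k x.
Proof.
move=> Hi; rewrite (sflagE (honest_local_inv T Hi)) => /andP[_ Hc].
exists (rcv_sval (sigma T i) k x :\: F).
  by rewrite cardsD; have := subset_leq_card (subsetIr (rcv_sval (sigma T i) k x) F); lia.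
move=> j; rewrite in_setD => /andP[Hj Hr]; split=> //.
exact: (rcvd_sent (m := SVAL k x) Hi Hj Hr).
Qed.

Lemma unsent_rcv_sval_card T i k x : i \notin F ->
  (forall j, j \notin F -> sv_sent (sigma T j) k x = false) -> #|rcv_sval (sigma T.+1 i) k x| <= t.
Proof.
move=> Hi Hns; apply: leq_trans few_faulty; apply/subset_leq_card/subsetP => j Hr.
apply: contraT => Hj; rewrite -(Hns j Hj).
exact: (rcvd_sender (m := SVAL k x) Hi Hj Hr).
Qed.

Lemma unsent_sflag T i k x : i \notin F ->
  (forall j, j \notin F -> sv_sent (sigma T j) k x = false) -> sflag (sigma T i) k x = false.
Proof.
move=> Hi /(unsent_rcv_sval_card Hi) Hc.
have {}Hc := leq_trans (subset_leq_card (rcv_sval_sub (honest_extends Hi (leqnSn T)) k x)) Hc.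
rewrite (sflagE (honest_local_inv T Hi)).
by case: leqP => [Hc'|]; rewrite ?andbF //; lia.
Qed.

Lemma aux_quorum_sender T i rho x (S : {set 'I_n}) : i \notin F -> #|S| = n - t ->
  S \subset rcv_aux (sigma T i) rho x -> exists2 j, j \notin F & aux_sent (sigma T j) rho x.
Proof.
move=> Hi HS /subsetP sS; have [j [Hj _ HjF]] := quorums_meet_honest HS HS.
by exists j => //; apply: (rcvd_sent (m := AUX rho x) Hi HjF); apply: sS.
Qed.

Lemma aux_quorums_agree T T' i i' rho x y (S S' : {set 'I_n}) : i \notin F -> i' \notin F ->
  #|S| = n - t -> #|S'| = n - t ->
  S \subset rcv_aux (sigma T i) rho x -> S' \subset rcv_aux (sigma T' i') rho y -> x = y.
Proof.
move=> Hi Hi' HS HS' /subsetP sS /subsetP sS'.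
have [j [jS jS' Hj]] := quorums_meet_honest HS HS'.
have Hx := rcvd_sent (m := AUX rho x) Hi Hj (sS j jS).
have Hy := rcvd_sent (m := AUX rho y) Hi' Hj (sS' j jS').
have /= Hx' := sent_mono Hj (leq_maxl T T') Hx.
have /= Hy' := sent_mono Hj (leq_maxr T T') Hy.
have := aux_sent_uniq (honest_local_inv (maxn T T') Hj) rho.
by case: (x) (y) Hx' Hy' => [] [] // -> ->.
Qed.

Definition enabled T i : Prop := exists g', gstep t F prop coin (sigma T) (Local i) g'.

Lemma lstep_enabled T i : i \notin F ->
  (exists ls', lstep t coin (prop i) (sigma T i) ls') -> enabled T i.
Proof.
move=> Hi [ls' Hs]; exists (gupd (sigma T) i ls'); split=> //.
by split=> [|j /negbTE]; rewrite /gupd ?eqxx // => ->.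
Qed.

(* A process stuck at an enabled stage would be continuously enabled, so
   fairness would give it a step. *)
Lemma stage_progress i m : i \notin F -> (exists T, m <= stage (sigma T i)) ->
  (exists T1, forall T, T1 <= T -> stage (sigma T i) = m -> enabled T i) ->
  exists T, m < stage (sigma T i).
Proof.
move=> Hi [T0 H0] [T1 H1]; apply: NNPP => stuck.
have stage_m T : maxn T0 T1 <= T -> stage (sigma T i) = m.
  move=> HT; apply/eqP; rewrite eqn_leq; apply/andP; split.
    by rewrite leqNgt; apply/negP => Hlt; apply: stuck; exists T.
  exact: leq_trans H0 (stage_mono (honest_extends Hi (leq_trans (leq_maxl _ _) HT))).
have [T [HT Hlab]] := fairness.2 i (maxn T0 T1) Hi
  (fun T HT => H1 T (leq_trans (leq_maxr _ _) HT) (stage_m T HT)).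
have := exec.2 T; rewrite Hlab => -[_ [Hs _]].
have := stage_lstep (honest_local_inv T Hi) Hs.
by rewrite (stage_m T HT) (stage_m T.+1 (leqW HT)) => /n_Sn.
Qed.

Lemma stage_all m : (forall i, i \notin F -> exists T, m <= stage (sigma T i)) ->
  exists T, forall i, i \notin F -> m <= stage (sigma T i).
Proof.
move=> H; have [T HT] : exists T, forall i, i \in ~: F -> m <= stage (sigma T i).
  apply: eventually_all => [i T T'|i]; rewrite in_setC; last exact: H.
  by move=> Hi HT /leq_trans; apply; apply: stage_mono (honest_extends Hi HT).
by exists T => i Hi; apply: HT; rewrite in_setC.
Qed.

Lemma rcvd_eventually_all T (A : {set 'I_n}) q m : q \notin F ->
  {in A, forall j, j \notin F /\ sent (sigma T j) m} ->
  exists T', {in A, forall j, rcvd (sigma T' q) j m}.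
Proof.
move=> Hq HA; apply: eventually_all => [j T1 T2 _ HT|j /HA [Hj Hs]].
  exact: rcvd_mono Hq HT.
exact: fairness.1 T j q m Hj Hq Hs.
Qed.

Lemma sv_sent_eventually K x q : q \notin F -> (exists T0, sent_by_many T0 K x) ->
  (exists T, invoked (sigma T q) K x) -> exists T, sv_sent (sigma T q) K x.
Proof.
move=> Hq [T0 [A HA sentA]] [T2 Hinv].
have [T1 HT1] := rcvd_eventually_all (m := SVAL K x) Hq sentA.
exists (maxn T1 T2); apply: (echo_sent (honest_local_inv _ Hq)).
  exact: (invoked_mono (honest_extends Hq (leq_maxr _ _)) Hinv).
rewrite addn1; apply: leq_trans HA _; apply/subset_leq_card/subsetP => j /HT1.
exact: (rcvd_mono (m := SVAL K x) Hq (leq_maxl _ _)).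
Qed.

Lemma sflag_eventually K x :
  (exists T0, sent_by_many T0 K x) ->
  (forall q, q \notin F -> exists T, invoked (sigma T q) K x) ->
  forall q, q \notin F -> exists T, sflag (sigma T q) K x.
Proof.
move=> many Hinv q Hq.
have [T3 H3] : exists T, {in ~: F, forall j, j \notin F /\ sv_sent (sigma T j) K x}.
  apply: eventually_all => [j T T'|j]; rewrite in_setC => Hj.
    by move=> HT [_ Hs]; split=> //; exact: (sv_sent_mono (honest_extends Hj HT) Hs).
  by have [T HT] := sv_sent_eventually Hj many (Hinv j Hj); exists T.
have [T4 H4] := rcvd_eventually_all (m := SVAL K x) Hq H3.
have [T2 H2] := Hinv q Hq.
exists (maxn T4 T2); rewrite (sflagE (honest_local_inv _ Hq)).
rewrite (invoked_mono (honest_extends Hq (leq_maxr _ _)) H2) /=.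
have : #|~: F| <= #|rcv_sval (sigma (maxn T4 T2) q) K x|.
  apply/subset_leq_card/subsetP => j /H4.
  exact: (rcvd_mono (m := SVAL K x) Hq (leq_maxl _ _)).
move=> Hc; apply: leq_trans Hc; apply: leq_trans honest_card; lia.
Qed.

Lemma stage_ge1 i : i \notin F -> exists T, 1 <= stage (sigma T i).
Proof.
move=> Hi; apply: (stage_progress (m := 0) Hi); first by exists 0.
exists 0 => T _ H0; apply: lstep_enabled => //; apply: lstep_total_start.
by apply: (stage_start_round (m := 0) (honest_local_inv T Hi)); left.
Qed.

Lemma reach_PWaitEst m : (forall i, i \notin F -> exists T, 3 * m + 1 <= stage (sigma T i)) ->
  forall i, i \notin F -> exists T, 3 * m + 2 <= stage (sigma T i).
Proof.
move=> H i Hi; case: (stage_progress Hi (H i Hi)) => [| T HT]; last first.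
  by exists T; rewrite -addn1 -addnA in HT.
exists 0 => T _ Hs; apply: lstep_enabled => //; apply: lstep_total_start.
by apply: (stage_start_round (m := m) (honest_local_inv T Hi)); right.
Qed.

Lemma round1_sent_by_many T0 : (forall j, j \notin F -> 2 <= stage (sigma T0 j)) ->
  exists x, sent_by_many T0 1 x.
Proof.
move=> H0; have sent1 j : j \notin F -> sv_sent (sigma T0 j) 1 (prop j).
  by move=> Hj; apply: (proposal_sent (honest_local_inv T0 Hj)); apply: H0.
case: (ltnP t #|~: F :&: [set j | prop j]|) => [many1 | few1].
  exists true, (~: F :&: [set j | prop j]) => // j; rewrite !inE => /andP[Hj Hp].
  by split=> //; rewrite -Hp sent1.
exists false, (~: F :\: [set j | prop j]).
  rewrite -(leq_add2l #|~: F :&: [set j | prop j]|) cardsID.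
  by apply: leq_trans (leq_add few1 (leqnn _)) (leq_trans _ honest_card); lia.
move=> j; rewrite !inE => /andP[/negbTE Hp Hj].
by split=> //; rewrite -Hp sent1.
Qed.

Lemma next_round_sent_by_many T0 m : 0 < m ->
  (forall j, j \notin F -> 3 * m + 2 <= stage (sigma T0 j)) ->
  exists x, sent_by_many T0 (est_tag coin m.+1 x) x.
Proof.
move=> m_gt0 H0; have [tag_new tag_keep] := @est_tag_succ coin m (coin m) (fun _ => erefl).
case: (boolP [exists j in ~: F, sflag (sigma T0 j) (est_tag coin m (coin m)) (coin m)]).
  case/existsP => j /andP[]; rewrite in_setC => Hj Hflag.
  by exists (coin m); rewrite tag_keep; apply: sflag_sent_by_many Hj Hflag.
move=> none_flag; exists (~~ coin m); rewrite tag_new.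
exists (~: F); first exact: honest_card_gt.
move=> j; rewrite in_setC => Hj; split=> //.
have /orP[// | Hflag] := est_sent_or_flag (honest_local_inv T0 Hj) m_gt0 (H0 j Hj).
by move/existsP: none_flag; case; exists j; rewrite in_setC Hj.
Qed.

Lemma reach_PWaitAux m : (forall i, i \notin F -> exists T, 3 * m + 2 <= stage (sigma T i)) ->
  forall i, i \notin F -> exists T, 3 * m + 3 <= stage (sigma T i).
Proof.
move=> H; have [T0 H0] := stage_all H.
have Hinv x q : q \notin F -> exists T, invoked (sigma T q) (est_tag coin m.+1 x) x.
  move=> Hq; exists T0; apply: (invoked_tag (honest_local_inv T0 Hq)) => //.
  by have := H0 q Hq; lia.
have [x Hx] : exists x, forall q, q \notin F -> exists T, sflag (sigma T q) (est_tag coin m.+1 x) x.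
  case: (posnP m) => [m0 | m_gt0].
    subst m; have [x many] : exists x, sent_by_many T0 1 x.
      by apply: round1_sent_by_many => j /H0.
    exists x; move: (Hinv x); rewrite est_tag1 => Hinv1.
    by apply: sflag_eventually Hinv1; exists T0.
  have [x many] := next_round_sent_by_many m_gt0 H0.
  by exists x; apply: sflag_eventually (Hinv x); exists T0.
move=> i Hi; have [T1 H1] := Hx i Hi.
case: (stage_progress Hi (H i Hi)) => [| T HT]; last first.
  by exists T; rewrite -addn1 -addnA in HT.
exists T1 => T HT Hs; apply: lstep_enabled => //.
have [Hpc Hr] := stage_PWaitEst (honest_local_inv T Hi) Hs.
have Hpf : ptrflag (sigma T i) x.
  by rewrite /ptrflag (ptr_tag (honest_local_inv T Hi)) ?Hpc ?Hr // (sflag_mono Hi HT H1).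
by rewrite /lstep Hpc; eexists; split; last reflexivity; case: (x) Hpf => ->; rewrite ?orbT.
Qed.

Lemma aux_eventually_usable T0 j i rho w : j \notin F -> i \notin F ->
  aux_sent (sigma T0 j) rho w ->
  (forall q, q \notin F -> exists T, invoked (sigma T q) (est_tag coin rho w) w) ->
  exists T, j \in rcv_aux (sigma T i) rho w /\ sflag (sigma T i) (est_tag coin rho w) w.
Proof.
move=> Hj Hi Haux Hinv.
have [Ta Ha] := fairness.1 T0 j i (AUX rho w) Hj Hi Haux.
have [_ _ Hflag] := aux_sent_flag (honest_local_inv T0 Hj) Haux.
have [Tb Hb] := sflag_eventually (ex_intro _ T0 (sflag_sent_by_many Hj Hflag)) Hinv Hi.
exists (maxn Ta Tb); split.
- exact: (rcvd_mono (m := AUX rho w) Hi (leq_maxl _ _) Ha).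
- exact: sflag_mono Hi (leq_maxr _ _) Hb.
Qed.

Lemma reach_next_round m : (forall i, i \notin F -> exists T, 3 * m + 3 <= stage (sigma T i)) ->
  forall i, i \notin F -> exists T, 3 * m + 4 <= stage (sigma T i).
Proof.
move=> H; have [T0 H0] := stage_all H.
pose w j := aux_sent (sigma T0 j) m.+1 true.
have Haux j : j \notin F -> aux_sent (sigma T0 j) m.+1 (w j).
  move=> Hj; have Hst : 3 * m.+1 <= stage (sigma T0 j) by have := H0 j Hj; lia.
  have := aux_sent_round (honest_local_inv T0 Hj) (ltn0Sn m) Hst.
  by rewrite /w; case E: (aux_sent (sigma T0 j) m.+1 true); rewrite ?E ?orbF.
have Hinv x q : q \notin F -> exists T, invoked (sigma T q) (est_tag coin m.+1 x) x.
  move=> Hq; exists T0; apply: (invoked_tag (honest_local_inv T0 Hq)) => //.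
  by have := H0 q Hq; lia.
move=> i Hi.
have [T1 H1] : exists T, {in ~: F, forall j,
    j \in rcv_aux (sigma T i) m.+1 (w j) /\ sflag (sigma T i) (est_tag coin m.+1 (w j)) (w j)}.
  apply: eventually_all => [j T T' _ HT [Ha Hf] | j]; last rewrite in_setC => Hj.
    by split; [exact: (rcvd_mono (m := AUX _ _) Hi HT Ha) | exact: sflag_mono Hi HT Hf].
  exact: aux_eventually_usable Hj Hi (Haux j Hj) (Hinv (w j)).
have [S sSF HS] := subset_of_card honest_card.
case: (stage_progress Hi (H i Hi)) => [| T HT]; last first.
  by exists T; rewrite -addn1 -addnA in HT.
exists T1 => T HT Hs; apply: lstep_enabled => //.
have [Hpc Hr] := stage_PWaitAux (honest_local_inv T Hi) Hs.
exists (end_round coin (sigma T i) S w); apply/(lstep_PWaitAuxP Hpc).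
exists S, w; split=> //; split=> // j /(subsetP sSF) /H1 [Ha Hf]; rewrite Hr; split.
- exact: (rcvd_mono (m := AUX _ _) Hi HT Ha).
- by rewrite /ptrflag (ptr_tag (honest_local_inv T Hi)) ?Hpc ?Hr // (sflag_mono Hi HT Hf).
Qed.

Lemma stage_unbounded rho i : i \notin F -> exists T, 3 * rho + 1 <= stage (sigma T i).
Proof.
elim: rho i => [|rho IH] i Hi; first by rewrite muln0; apply: stage_ge1.
have [T HT] := reach_next_round (reach_PWaitAux (reach_PWaitEst IH)) Hi.
by exists T; rewrite mulnS; lia.
Qed.

Variables (p : 'I_n) (v : bool) (r k0 : nat).
Hypothesis p_honest : p \notin F.
Hypothesis p_decides : dec (sigma k0 p) = Some (v, r).

Lemma decision_quorum : [/\ v = coin r, 0 < r &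
  exists S : {set 'I_n}, #|S| = n - t /\ S \subset rcv_aux (sigma k0 p) r v].
Proof. exact: (dec_quorum (honest_local_inv k0 p_honest) p_decides). Qed.

(* The instances that [ptr[~~ v]] can refer to after round [r]. *)
Definition blocked k : bool := (r < k) && (coin k.-1 == v).

Lemma est_tag_blocked rho : r < rho -> blocked (est_tag coin rho (~~ v)).
Proof.
have [v_coin r_gt0 _] := decision_quorum.
elim: rho => [//|rho IH]; rewrite ltnS leq_eqVlt est_tagS => /predU1P[<- | lt_r].
  by rewrite r_gt0 v_coin eqxx /blocked ltnSn v_coin eqxx.
case: ifP => [/andP[_ /eqP]|_]; last exact: IH.
by rewrite /blocked ltnS (ltnW lt_r) /=; case: (v); case: (coin rho).
Qed.

Lemma decision_round_supported T j : j \notin F ->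
  pc (sigma T j) = PStart -> rnd (sigma T j) = r -> sup (sigma T j).
Proof.
have [v_coin r_gt0 [S [HS HSp]]] := decision_quorum.
move=> Hj Hpc Hr; apply: contraT => /negbTE Hsup.
have HL := honest_local_inv T Hj.
have r_gt0' : 0 < rnd (sigma T j) by rewrite Hr.
have [[S' [HS' HS'j]] _] := unsup_quorum HL Hpc r_gt0' Hsup.
rewrite Hr -v_coin in HS'j.
by have := aux_quorums_agree Hj p_honest HS' HS HS'j HSp; case: (v).
Qed.

Lemma blocked_sv_unsent k : blocked k ->
  forall T j, j \notin F -> sv_sent (sigma T j) k (~~ v) = false.
Proof.
have [v_coin r_gt0 _] := decision_quorum.
elim/ltn_ind: k => k IHk blocked_k T.
elim: T => [|T IH] j Hj; first by rewrite exec.1.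
apply/negP => /(sv_sent_step Hj) [| [echo | [Hpc Hk _ Hsup]]]; first by rewrite IH.
  by have := unsent_rcv_sval_card Hj IH; lia.
set rho := rnd (sigma T j) in Hk Hpc Hsup.
move: blocked_k; rewrite /blocked Hk /= ltnS leq_eqVlt => /andP[/predU1P[Er | lt_r] /eqP c_rho].
  by rewrite (decision_round_supported Hj Hpc (esym Er)) in Hsup.
have rho_gt0 : 0 < rho by apply: leq_ltn_trans lt_r.
have HL := honest_local_inv T Hj.
have [_] := unsup_quorum HL Hpc rho_gt0 Hsup; rewrite c_rho.
have tag_lt : est_tag coin rho (~~ v) < k by rewrite Hk ltnS est_tag_le.
by rewrite (unsent_sflag Hj (IHk _ tag_lt (est_tag_blocked lt_r) T)).
Qed.

Lemma blocked_sflag k T j : blocked k -> j \notin F -> sflag (sigma T j) k (~~ v) = false.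
Proof. by move=> blocked_k Hj; apply: unsent_sflag Hj (blocked_sv_unsent blocked_k T). Qed.

Lemma opposite_ptr_never_set q rho T : q \notin F -> r < rho -> in_round (sigma T q) rho ->
  exists kk, ptr (sigma T q) (~~ v) = Some kk /\
             forall T', sflag (sigma T' q) kk (~~ v) = false.
Proof.
move=> Hq lt_r [Hpc Hrnd]; exists (est_tag coin rho (~~ v)); split.
  by rewrite -Hrnd (ptr_tag (honest_local_inv T Hq)) // Hrnd; apply: leq_ltn_trans lt_r.
by move=> T'; apply: blocked_sflag Hq; apply: est_tag_blocked.
Qed.

Lemma no_opposite_decision q rho T : q \notin F -> r <= rho ->
  dec (sigma T q) <> Some (~~ v, rho).
Proof.
have [v_coin r_gt0 _] := decision_quorum.
move=> Hq; rewrite leq_eqVlt => /predU1P[<- | lt_r] Hd.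
  by have [] := dec_quorum (honest_local_inv T Hq) Hd; rewrite -v_coin; case: (v).
have [_ _ [S [HS HSq]]] := dec_quorum (honest_local_inv T Hq) Hd.
have [j Hj Haux] := aux_quorum_sender Hq HS HSq.
have [_ _] := aux_sent_flag (honest_local_inv T Hj) Haux.
by rewrite (blocked_sflag _ (est_tag_blocked lt_r) Hj).
Qed.

Lemma est_tag_sent_by_many rho : r <= rho -> exists T, sent_by_many T (est_tag coin rho v) v.
Proof.
have [v_coin r_gt0 [S [HS HSp]]] := decision_quorum.
move=> /subnKC <-; elim: (rho - r) => [|d IH].
  have [j Hj Haux] := aux_quorum_sender p_honest HS HSp.
  have [_ _ Hflag] := aux_sent_flag (honest_local_inv k0 Hj) Haux.
  by exists k0; rewrite addn0; apply: sflag_sent_by_many Hj Hflag.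
rewrite addnS est_tagS; case: ifP => [/andP[_ /eqP v_ncoin] | _ //].
have lt_r : r < r + d.
  by case: (posnP d) v_ncoin => [-> | d_gt0]; rewrite ?addn0 -?v_coin; [case: (v) | lia].
have [T HT] := stage_all (fun i Hi => stage_unbounded (r + d).+1 Hi).
exists T, (~: F); first exact: honest_card_gt.
move=> j; rewrite in_setC => Hj; split=> //.
have HL := honest_local_inv T Hj.
have Hst : 3 * (r + d) + 2 <= stage (sigma T j) by have := HT j Hj; lia.
have c_rd : coin (r + d) = ~~ v by rewrite v_ncoin negbK.
have := est_sent_or_flag HL (leq_ltn_trans (leq0n _) lt_r) Hst.
by rewrite c_rd negbK (blocked_sflag _ (est_tag_blocked lt_r) Hj) orbF.
Qed.

Lemma decided_ptr_eventually_set q rho T : q \notin F -> r <= rho -> in_round (sigma T q) rho ->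
  exists kk, ptr (sigma T q) v = Some kk /\
             exists T', T <= T' /\ sflag (sigma T' q) kk v.
Proof.
have [_ r_gt0 _] := decision_quorum.
move=> Hq le_r [Hpc Hrnd]; exists (est_tag coin rho v); split.
  by rewrite -Hrnd (ptr_tag (honest_local_inv T Hq)) // Hrnd; apply: leq_trans le_r.
have Hinv q' : q' \notin F -> exists T', invoked (sigma T' q') (est_tag coin rho v) v.
  move=> Hq'; have [T' HT'] := stage_unbounded rho Hq'.
  by exists T'; apply: (invoked_tag (honest_local_inv T' Hq')); [apply: leq_trans le_r | lia].
have [T' HT'] := sflag_eventually (est_tag_sent_by_many le_r) Hinv Hq.
by exists (maxn T T'); split; [apply: leq_maxl | apply: sflag_mono Hq (leq_maxr _ _) HT'].
Qed.

End Execution.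

Theorem lemma13 (n t : nat) (F : {set 'I_n}) (prop : 'I_n -> bool)
  (coin : nat -> bool) (sigma : nat -> gstate n) (lab : nat -> label n) :
  3 * t < n -> #|F| <= t ->
  execution t F prop coin sigma lab -> fair t F prop coin sigma lab ->
  forall (p : 'I_n) (v : bool) (r k0 : nat),
    p \notin F -> dec (sigma k0 p) = Some (v, r) ->
    (forall (q : 'I_n) (rho k : nat), q \notin F -> r <= rho ->
       in_round (sigma k q) rho ->
       exists kk, ptr (sigma k q) v = Some kk /\
                  exists k', k <= k' /\ sflag (sigma k' q) kk v)
    /\ (forall (q : 'I_n) (rho k : nat), q \notin F -> r <= rho ->
          dec (sigma k q) <> Some (~~ v, rho))
    /\ (forall (q : 'I_n) (rho k : nat), q \notin F -> r < rho ->
          in_round (sigma k q) rho ->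
          exists kk, ptr (sigma k q) (~~ v) = Some kk /\
                     forall k', sflag (sigma k' q) kk (~~ v) = false).
Proof.
move=> resilience few_faulty exec fairness p v r k0 p_honest p_decides.
split; [|split] => q rho k.
- exact: (decided_ptr_eventually_set resilience few_faulty exec fairness p_honest p_decides).
- exact: (no_opposite_decision resilience few_faulty exec p_honest p_decides).
- exact: (opposite_ptr_never_set resilience few_faulty exec p_honest p_decides).
Qed.
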